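(* Let $u$ be a one-sided Sturmian sequence with left special sequence $l=l_1l_2\dots$, and let $n>1$ and $x\in\{0,1\}$ be such that $xL_{n-1}=xl_1l_2\dots l_{n-1}$ is a significant block of $\tilde X_u$. Then the HB diagram of $X_u^+$ contains the arrow $xl_1l_2\dots l_{n-1}\to xl_1l_2\dots l_n$.
   Context: A sequence $u\in\{0,1\}^{\mathbb N}$ is Sturmian if for every $n\ge1$ exactly $n+1$ distinct blocks of length $n$ occur in $u$. $X_u^+$ is the closure of $\{\sigma^n u:n\in\mathbb N\}$, $\sigma$ the shift $(\sigma x)_i=x_{i+1}$, and $\tilde X_u=\{x\in\{0,1\}^{\mathbb Z}: x_px_{p+1}\dots\in X_u^+\ \forall p\}$; the languages of $u$, $X_u^+$, $\tilde X_u$ coincide. For each $n$ there is a unique block $L_n$ of length $n$ with $0L_n$ and $1L_n$ in the language; these are the prefixes $L_n=l_1\dots l_n$ of the left special sequence $l$. For a block $a_{-n}\dots a_0$ in the language, $\mathrm{fol}(a_{-n}\dots a_0)=\{b_0b_1\dots\in X_u^+:\exists b\in\tilde X_u,\ b_{-n}\dots b_0=a_{-n}\dots a_0\}$. A block $a_{-n}\dots a_0$ ($n\ge1$) is significant if $\mathrm{fol}(a_{-n}\dots a_0)\subsetneq\mathrm{fol}(a_{-n+1}\dots a_0)$; $0$ and $1$ are also significant. $\mathrm{sig}(\cdot)$ is the longest significant suffix. The HB diagram has vertex set the significant blocks and an arrow $\alpha\to\beta$ iff there is a symbol $b$ with $\alpha b$ in the language and $\beta=\mathrm{sig}(\alpha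 b)$. *)

(* Sequences u : nat -> bool (one-sided), x : int -> bool (two-sided).
   Symbols 0,1 are encoded as false,true. Blocks are seq bool. *)
From mathcomp Require Import all_boot all_order all_algebra.
Set Implicit Arguments. Unset Strict Implicit. Unset Printing Implicit Defensive.

Definition in_lang (u : nat -> bool) (w : seq bool) : Prop :=
  exists i : nat, forall k : nat, k < size w -> u (i + k) = nth false w k.

Definition sturmian (u : nat -> bool) : Prop :=
  forall n : nat, 0 < n ->
    exists s : seq (seq bool), [/\ uniq s, size s = n.+1 &
      forall w, w \in s <-> (size w = n /\ in_lang u w)].

(* X_u^+ : closure of the orbit {sigma^k u} in {0,1}^N (product topology,
   unfolded via cylinder neighbourhoods) *)
Definition in_Xplus (u : nat -> bool) (y : nat -> bool) : Prop :=
  forall n : nat, exists k : nat, forall i : nat, i < n -> u (k + i) = y i.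

Definition in_Xtilde (u : nat -> bool) (x : int -> bool) : Prop :=
  forall p : int, in_Xplus u (fun i : nat => x (p + (Posz i))%R).

(* fol(a_{-n} ... a_0), with a = [:: a_{-n}; ...; a_0] (so n = size a - 1) *)
Definition fol (u : nat -> bool) (a : seq bool) (y : nat -> bool) : Prop :=
  in_Xplus u y /\
  exists b : int -> bool, [/\ in_Xtilde u b,
    (forall i : nat, b (Posz i) = y i) &
    (forall k : nat, k < size a ->
       b (Posz k - Posz (size a).-1)%R = nth false a k)].

Definition significant (u : nat -> bool) (a : seq bool) : Prop :=
  in_lang u a /\
  (size a = 1 \/
   (2 <= size a /\
    (forall y, fol u a y -> fol u (behead a) y) /\
    exists y, fol u (behead a) y /\ ~ fol u a y)).

Definition is_sig (u : nat -> bool) (w s : seq bool) : Prop :=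
  [/\ (exists k, k < size w /\ s = drop k w), significant u s &
      forall k, k < size w -> significant u (drop k w) -> size (drop k w) <= size s].

Definition HB_arrow (u : nat -> bool) (alpha beta : seq bool) : Prop :=
  significant u alpha /\ significant u beta /\
  exists c : bool, in_lang u (rcons alpha c) /\ is_sig u (rcons alpha c) beta.

(* L_n = l_1 ... l_n, where l_j is encoded as l (j-1) *)
Definition Lpref (l : nat -> bool) (n : nat) : seq bool := mkseq l n.

Definition left_special_seq (u : nat -> bool) (l : nat -> bool) : Prop :=
  forall n : nat, in_lang u (false :: Lpref l n) /\ in_lang u (true :: Lpref l n).

(* Since x L_{n-1} l_n = x L_n, the arrow is there as soon as x L_n is itself
   significant: it is then its own longest significant suffix.  A Sturmian word
   is not eventually periodic (Morse-Hedlund), so every factor recurs and the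
   occurrences of (~x) L_n cannot all be followed by the left special sequence l;
   hence some (~x) L_n V is a factor with L_n V not a prefix of l.  By recurrence
   this factor extends to a two-sided point of X~, whose right half y follows L_n.
   If y also followed x L_n, every prefix of L_n V ... would be preceded by both
   letters, i.e. left special, hence a prefix of l by uniqueness of left special
   factors. *)

From mathcomp Require Import all_boot all_order all_algebra zify.
From mathcomp Require Import boolp.
Set Implicit Arguments. Unset Strict Implicit. Unset Printing Implicit Defensive.
Import GRing.Theory.

Definition occurs_at (v : nat -> bool) (w : seq bool) (i : nat) : Prop :=
  forall k, k < size w -> v (i + k) = nth false w k.

Definition window (v : nat -> bool) (i m : nat) : seq bool :=
  mkseq (fun k => v (i + k)) m.

Lemma mkseq_cons (T : Type) (f : nat -> T) n : mkseq f n.+1 = f 0 :: mkseq (fun k => f k.+1) n.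
Proof. by rewrite /mkseq /= -add1n iotaDl -map_comp. Qed.

Lemma windowS v i m : window v i m.+1 = rcons (window v i m) (v (i + m)).
Proof. exact: mkseqS. Qed.

Lemma windowD v i m1 m2 : window v i (m1 + m2) = window v i m1 ++ window v (i + m1) m2.
Proof.
by elim: m2 => [|m IH]; rewrite ?addn0 ?cats0 // addnS !windowS IH rcons_cat addnA.
Qed.

Lemma window_cons v i m : window v i m.+1 = v i :: window v i.+1 m.
Proof. by rewrite /window mkseq_cons addn0; under eq_mkseq do rewrite -addSnnS. Qed.

Lemma occurs_at_window v i m : occurs_at v (window v i m) i.
Proof. by move=> k; rewrite size_mkseq => hk; rewrite nth_mkseq. Qed.

Lemma in_lang_window v i m : in_lang v (window v i m).
Proof. by exists i; apply: occurs_at_window. Qed.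

Lemma occurs_at_windowE v w i : occurs_at v w i -> w = window v i (size w).
Proof.
move=> occ; apply: (eq_from_nth (x0 := false)); first by rewrite size_mkseq.
by move=> k hk; rewrite nth_mkseq // occ.
Qed.

Lemma in_lang_extend_right v w : in_lang v w -> exists b, in_lang v (rcons w b).
Proof.
move=> [i occ]; exists (v (i + size w)); exists i => k.
rewrite size_rcons ltnS leq_eqVlt nth_rcons => /predU1P [-> | hk].
  by rewrite ltnn eqxx.
by rewrite hk occ.
Qed.

Definition eventually_periodic (v : nat -> bool) : Prop :=
  exists i p, 0 < p /\ forall t, v (i + t) = v (i + p + t).

Fixpoint bool_words (m : nat) : seq (seq bool) :=
  if m is m'.+1 then map (cons false) (bool_words m') ++ map (cons true) (bool_words m')
  else [:: [::]].

Lemma mem_bool_words m w : (w \in bool_words m) = (size w == m).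
Proof.
elim: m w => [|m IH] w /=; first by rewrite inE; case: w.
rewrite mem_cat; case: w => [|b w] /=; first by apply/negP => /orP [] /mapP [].
have cons_inj (c : bool) : injective (cons c) by move=> ? ? [].
rewrite eqSS -IH.
by case: b; rewrite mem_map; try exact: cons_inj;
  [rewrite orbC | ]; case: mapP => [[? _ []] | _]; rewrite ?orbF.
Qed.

Definition factors (v : nat -> bool) (m : nat) : seq (seq bool) :=
  undup [seq w <- bool_words m | `[< in_lang v w >]].

Lemma factors_uniq v m : uniq (factors v m).
Proof. exact: undup_uniq. Qed.

Lemma factorsP v m w : reflect (size w = m /\ in_lang v w) (w \in factors v m).
Proof.
rewrite mem_undup mem_filter mem_bool_words andbC.
by apply: (iffP andP) => -[/eqP ? /asboolP].
Qed.

Lemma window_collision v m : exists i j, i < j /\ window v i m = window v j m.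
Proof.
pose N := size (bool_words m).
have : ~~ uniq [seq window v i m | i <- iota 0 N.+1].
  apply/negP => /uniq_leq_size le_words.
  suff : size [seq window v i m | i <- iota 0 N.+1] <= N by rewrite size_map size_iota ltnn.
  apply: le_words => _ /mapP [i _ ->].
  by rewrite mem_bool_words size_mkseq.
case/(uniqPn [::]) => i [j [ij]]; rewrite size_map size_iota => jN.
have iN := ltn_trans ij jN.
by rewrite !(nth_map 0) ?size_iota ?nth_iota // => ?; exists i, j.
Qed.

Lemma aperiodic_right_special v m : ~ eventually_periodic v ->
  exists w, [/\ size w = m, in_lang v (rcons w false) & in_lang v (rcons w true)].
Proof.
move=> aper; apply: contrapT => no_rs; apply: aper.
have next_eq i j : window v i m = window v j m -> v (i + m) = v (j + m).
  move=> eq_ij; apply: contrapT => ne_ij; apply: no_rs; exists (window v i m).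
  have ext k : in_lang v (rcons (window v k m) (v (k + m))).
    by rewrite -windowS; apply: in_lang_window.
  have := ext j; rewrite -eq_ij; move: (ext i) ne_ij.
  by case: (v (i + m)); case: (v (j + m)) => // ? _ ?; split; rewrite // size_mkseq.
have [i [j [ij eq_ij]]] := window_collision v m.
have shift t : v (i + t) = v (j + t).
  elim/ltn_ind: t => t IH; case: (ltnP t m) => [tm | mt].
    by have := congr1 (nth false ^~ t) eq_ij; rewrite !nth_mkseq.
  have := next_eq (i + (t - m)) (j + (t - m)); rewrite -!addnA subnK //; apply.
  apply: (eq_from_nth (x0 := false)) => [|k]; rewrite !size_mkseq // => km.
  by rewrite !nth_mkseq // -!addnA IH //; lia.
exists i, (j - i); split; first by rewrite subn_gt0.
by move=> t; rewrite shift subnKC 1?ltnW.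
Qed.

Lemma aperiodic_factor_count v m : ~ eventually_periodic v -> m < size (factors v m).
Proof.
move=> aper; elim: m => [|m IH].
  have : [::] \in factors v 0 by apply/factorsP; split; last exists 0.
  by case: (factors v 0).
have [w0 [size_w0 w0F w0T]] := aperiodic_right_special m aper.
pose ext w := `[< in_lang v (rcons w true) >].
have extP w : in_lang v w -> in_lang v (rcons w (ext w)).
  by case/in_lang_extend_right => -[] lw; rewrite /ext; case: asboolP.
pose E := [seq rcons w (ext w) | w <- factors v m] ++ [:: rcons w0 (~~ ext w0)].
have uniq_E : uniq E.
  rewrite cat_uniq map_inj_uniq ?factors_uniq /=; last by move=> ? ? /rcons_inj [].
  by rewrite andbT orbF; apply/mapP => -[w _ /rcons_inj [-> ]]; case: (ext w).
have sub_E : {subset E <= factors v m.+1}.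
  move=> w'; rewrite mem_cat => /orP [/mapP [w /factorsP [size_w lw] ->] | /predU1P [-> | //]].
    by apply/factorsP; rewrite size_rcons size_w; split; last exact: extP.
  apply/factorsP; rewrite size_rcons size_w0; split => //.
  by rewrite /ext; case: asboolP => // /(_ w0T).
by have := uniq_leq_size uniq_E sub_E; rewrite size_cat size_map addn1; apply: leq_trans.
Qed.

Lemma sturmian_aperiodic u : sturmian u -> ~ eventually_periodic u.
Proof.
move=> stu [i [p [p_gt0 per]]].
have [s [uniq_s size_s mem_s]] := stu (i + p) (ltn_addl i p_gt0).
have early w : in_lang u w -> exists2 j, j < i + p & occurs_at u w j.
  case=> j; elim/ltn_ind: j => j IH occ; case: (ltnP j (i + p)) => [lt_j | le_j].
    by exists j.
  apply: (IH (j - p)); first by lia.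
  move=> k lt_k; rewrite -occ // (_ : j + k = i + p + (j - p - i + k)); last by lia.
  by rewrite -per; congr u; lia.
have sub : {subset s <= [seq window u j (i + p) | j <- iota 0 (i + p)]}.
  move=> w /mem_s [size_w /early [j lt_j occ]]; apply/mapP; exists j.
    by rewrite mem_iota.
  by rewrite -size_w; apply: occurs_at_windowE.
by have := uniq_leq_size uniq_s sub; rewrite size_map size_iota size_s ltnn.
Qed.

(* Otherwise the shifted sequence, still aperiodic, would have size w + 1 factors
   of length size w, all among the size w factors of u other than w. *)
Lemma sturmian_recurrent u w : sturmian u -> in_lang u w ->
  exists2 i, 0 < i & occurs_at u w i.
Proof.
move=> stu lw; apply: contrapT => no_return.
have only0 i : occurs_at u w i -> i = 0.
  by case: i => // i occ; case: no_return; exists i.+1.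
case: (posnP (size w)) => [w0 | w_gt0].
  by apply: no_return; exists 1 => // k; rewrite w0.
pose v t := u t.+1.
have aper_v : ~ eventually_periodic v.
  by move=> [i [p [p_gt0 per]]]; apply: (sturmian_aperiodic stu); exists i.+1, p.
have [s [uniq_s size_s mem_s]] := stu (size w) w_gt0.
have sub : {subset factors v (size w) <= rem w s}.
  move=> w' /factorsP [size_w' [j occ]]; rewrite (mem_rem_uniq _ uniq_s) inE.
  apply/andP; split; last by apply/mem_s; split; last exists j.+1.
  by apply/eqP => eq_w; move: (only0 j.+1); rewrite -eq_w => /(_ occ).
have := uniq_leq_size (factors_uniq v (size w)) sub.
rewrite size_rem ?size_s; last by apply/mem_s.
by rewrite /= leqNgt (aperiodic_factor_count (size w) aper_v).
Qed.

Lemma sturmian_recurrent_after u w N : sturmian u -> in_lang u w ->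
  exists2 i, N <= i & occurs_at u w i.
Proof.
move=> stu lw; elim: N => [|N [i le_i occ]]; first by case: lw => i; exists i.
have [j j_gt0 occ_pref] := sturmian_recurrent stu (in_lang_window u 0 (i + size w)).
exists (j + i); first by lia.
move=> k lt_k; rewrite -addnA occ_pref ?size_mkseq; last by lia.
by rewrite nth_mkseq ?add0n ?occ //; lia.
Qed.

Lemma sturmian_extend_left u w : sturmian u -> in_lang u w -> exists b, in_lang u (b :: w).
Proof.
move=> stu lw; have [[|i] // _ occ] := sturmian_recurrent stu lw.
by exists (u i); exists i => -[|k] /= lt_k; rewrite ?addn0 // addnS occ.
Qed.

(* Left extensions of the m + 1 factors of length m, together with the second left
   extensions of w1 and w2, would give m + 3 factors of length m + 1. *)
Lemma sturmian_left_special_uniq u w1 w2 : sturmian u -> size w1 = size w2 ->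
  (forall b, in_lang u (b :: w1)) -> (forall b, in_lang u (b :: w2)) -> w1 = w2.
Proof.
move=> stu eq_size ls1 ls2; apply: contrapT => ne12.
case: (posnP (size w1)) => [w1_0 | w1_gt0].
  by apply: ne12; move: eq_size w1_0; case: w1 ls1 => [|? ?]; case: w2 ls2.
have [s [uniq_s size_s mem_s]] := stu _ w1_gt0.
have [s' [uniq_s' size_s' mem_s']] := stu _ (ltn0Sn (size w1)).
pose ext w := `[< in_lang u (true :: w) >].
have extP w : in_lang u w -> in_lang u (ext w :: w).
  by case/(sturmian_extend_left stu) => -[] lw; rewrite /ext; case: asboolP.
pose E := [seq ext w :: w | w <- s] ++ [:: ~~ ext w1 :: w1; ~~ ext w2 :: w2].
have uniq_E : uniq E.
  rewrite cat_uniq map_inj_uniq ?uniq_s /=; last by move=> ? ? [].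
  rewrite !inE andbT orbF; apply/andP; split.
    by apply/negP => /orP [] /mapP [w _ [+ eq_w]]; rewrite -eq_w; case: (ext _).
  by apply/negP => /eqP [_].
have sub_E : {subset E <= s'}.
  move=> w; rewrite mem_cat => /orP [/mapP [w' /mem_s [size_w' lw'] ->] | ].
    by apply/mem_s'; split; [rewrite /= size_w' | apply: extP].
  by rewrite !inE => /orP [] /eqP ->; apply/mem_s'; split; rewrite /= ?eq_size.
have := uniq_leq_size uniq_E sub_E.
by rewrite size_cat size_map size_s size_s' /= !addnS addn0 ltnn.
Qed.

Section TwoSidedExtension.

Variable u : nat -> bool.
Hypothesis stu : sturmian u.

(* [0] is a junk value for words outside the language. *)
Definition pre_occurrence (w : seq bool) : nat :=
  if pselect (exists j, occurs_at u w j.+1) is left ex then projT1 (cid ex) else 0.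

Lemma occurs_at_pre_occurrence w : in_lang u w -> occurs_at u w (pre_occurrence w).+1.
Proof.
move=> lw; rewrite /pre_occurrence; case: pselect => [ex | no_ex].
  by case: (cid ex).
by have [[|j] // _ occ] := sturmian_recurrent stu lw; case: no_ex; exists j.
Qed.

Definition extend (w : seq bool) : seq bool := window u (pre_occurrence w) (size w).+2.

Lemma size_extend w : size (extend w) = (size w).+2.
Proof. exact: size_mkseq. Qed.

Lemma nth_extend w k : in_lang u w -> k < size w ->
  nth false (extend w) k.+1 = nth false w k.
Proof.
move=> lw lt_k; rewrite nth_mkseq; last by lia.
by rewrite -addSnnS occurs_at_pre_occurrence.
Qed.

Definition tower (w : seq bool) (K : nat) : seq bool := iter K extend w.

Lemma towerS w K : tower w K.+1 = extend (tower w K).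
Proof. by []. Qed.

Lemma size_tower w K : size (tower w K) = size w + K.*2.
Proof. by elim: K => [|K IH]; rewrite ?addn0 // towerS size_extend IH doubleS !addnS. Qed.

Lemma in_lang_tower w K : in_lang u w -> in_lang u (tower w K).
Proof. by case: K => // K _; apply: in_lang_window. Qed.

Lemma nth_tower w K d j : in_lang u w -> j < size (tower w K) ->
  nth false (tower w (K + d)) (j + d) = nth false (tower w K) j.
Proof.
move=> lw lt_j; elim: d => [|d IH]; rewrite ?addn0 // !addnS -IH towerS.
apply: nth_extend; first exact: in_lang_tower.
by move: lt_j; rewrite !size_tower; lia.
Qed.

(* Level [K] of the tower is read at positions [-K, size w + K), with [w] at [0, size w). *)
Definition tower_point (w : seq bool) (z : int) : bool :=
  nth false (tower w (absz z).+1) (absz (z + Posz (absz z).+1)%R).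

Lemma tower_pointE w K z : in_lang u w -> absz z < K ->
  tower_point w z = nth false (tower w K) (absz (z + Posz K)%R).
Proof.
move=> lw lt_z; rewrite /tower_point -(nth_tower (K - (absz z).+1) lw).
  by rewrite subnKC //; congr nth; lia.
by rewrite size_tower; lia.
Qed.

Lemma two_sided_extension w : in_lang u w ->
  exists B, in_Xtilde u B /\ forall k, k < size w -> B (Posz k) = nth false w k.
Proof.
move=> lw; exists (tower_point w); split => [p m | k lt_k].
  pose K := (absz p + m).+1.
  have [q occ] := in_lang_tower K lw.
  exists (q + absz (p + Posz K)%R) => i lt_i.
  rewrite -addnA (tower_pointE (K := K)) //; last by lia.
  by rewrite occ ?size_tower; [congr nth | ]; lia.
rewrite (tower_pointE (K := k.+1)) // -[tower w k.+1]/(tower w (0 + k.+1)).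
by rewrite (_ : absz _ = k + k.+1) ?nth_tower //; lia.
Qed.

End TwoSidedExtension.

Lemma Xtilde_shift u B q : in_Xtilde u B -> in_Xtilde u (fun z => B (z + q)%R).
Proof.
move=> XB p m; have [k occ] := XB (p + q)%R m; exists k => i lt_i.
by rewrite occ //; congr B; lia.
Qed.

Lemma Xtilde_Xplus u B : in_Xtilde u B -> in_Xplus u (fun i => B (Posz i)).
Proof. by move=> XB m; have [k occ] := XB 0%R m; exists k => i lt_i; rewrite occ // add0r. Qed.

Lemma Xtilde_in_lang u B p m : in_Xtilde u B ->
  in_lang u (mkseq (fun t => B (p + Posz t)%R) m).
Proof.
move=> XB; have [k occ] := XB p m; exists k => i; rewrite size_mkseq => lt_i.
by rewrite nth_mkseq // occ.
Qed.

Lemma left_special_seq_in_lang u l : left_special_seq u l ->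
  forall b m, in_lang u (b :: Lpref l m).
Proof. by move=> ls [] m; case: (ls m). Qed.

Lemma size_Lpref l n : size (Lpref l n) = n.
Proof. exact: size_mkseq. Qed.

Lemma Xtilde_left_special_branch u l B1 B2 p :
  sturmian u -> left_special_seq u l -> in_Xtilde u B1 -> in_Xtilde u B2 ->
  B1 p != B2 p -> (forall t, B1 (p + Posz t.+1)%R = B2 (p + Posz t.+1)%R) ->
  forall t, B1 (p + Posz t.+1)%R = l t.
Proof.
move=> stu ls XB1 XB2 ne12 agree t.
pose W := mkseq (fun s => B1 (p + Posz s.+1)%R) t.+1.
have lang_W B : in_Xtilde u B -> (forall s, B (p + Posz s.+1)%R = B1 (p + Posz s.+1)%R) ->
    in_lang u (B p :: W).
  move=> XB agreeB; have := Xtilde_in_lang p t.+2 XB.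
  by rewrite mkseq_cons addr0 (eq_mkseq agreeB).
have ls_W b : in_lang u (b :: W).
  have [-> | ne1] := eqVneq b (B1 p); first exact: lang_W.
  have -> : b = B2 p by move: ne12 ne1; case: b; case: (B1 p); case: (B2 p).
  by apply: lang_W => // s; rewrite agree.
have := sturmian_left_special_uniq stu _ ls_W (left_special_seq_in_lang ls ^~ t.+1).
rewrite size_mkseq size_Lpref => /(_ erefl) /(congr1 (nth false ^~ t)).
by rewrite !nth_mkseq.
Qed.

Lemma left_special_seq_branch u l b n : sturmian u -> left_special_seq u l ->
  exists V, in_lang u (b :: Lpref l n ++ V) /\ Lpref l n ++ V <> Lpref l (n + size V).
Proof.
move=> stu ls; apply: contrapT => no_branch.
have follow i : occurs_at u (b :: Lpref l n) i -> forall s, u (i.+1 + s) = l s.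
  move=> occ s; pose V := window u (i.+1 + n) s.+1.
  have := occurs_at_windowE occ; rewrite /= size_Lpref window_cons => -[eq_b eq_L].
  have eq_LV : Lpref l n ++ V = window u i.+1 (n + s.+1) by rewrite windowD eq_L.
  have : Lpref l n ++ V = Lpref l (n + size V).
    apply: contrapT => ne; apply: no_branch; exists V; split => //.
    by rewrite eq_LV eq_b -window_cons; apply: in_lang_window.
  rewrite eq_LV size_mkseq => /(congr1 (nth false ^~ s)).
  by rewrite !nth_mkseq //; lia.
have [i _ occ_i] := sturmian_recurrent_after 0 stu (left_special_seq_in_lang ls b n).
have [j lt_ij occ_j] := sturmian_recurrent_after i.+1 stu (left_special_seq_in_lang ls b n).
apply: (sturmian_aperiodic stu); exists i.+1, (j - i); split; first by rewrite subn_gt0.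
by move=> t; rewrite follow // (_ : i.+1 + (j - i) + t = j.+1 + t) ?follow //; lia.
Qed.

Lemma fol_behead u a y : fol u a y -> fol u (behead a) y.
Proof.
move=> [Xy [B [XB By Ba]]]; split => //; exists B; split => //.
case: a Ba => //= c a Ba k lt_k; have := Ba k.+1 lt_k.
by rewrite (_ : (Posz k.+1 - Posz (size a))%R = (Posz k - Posz (size a).-1)%R) //; lia.
Qed.

Lemma significant_strict u a : in_lang u a -> 1 < size a ->
  (exists y, fol u (behead a) y /\ ~ fol u a y) -> significant u a.
Proof.
move=> la a_gt1 strict; split => //; right; split => //; split => //.
by move=> y; apply: fol_behead.
Qed.

Lemma is_sig_self u w : significant u w -> 0 < size w -> is_sig u w w.
Proof.
move=> sig_w w_gt0; split => //; last by move=> k _ _; rewrite size_drop leq_subr.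
by exists 0; rewrite drop0.
Qed.

Lemma significant_cons_Lpref u l x n : sturmian u -> left_special_seq u l -> 0 < n ->
  significant u (x :: Lpref l n).
Proof.
move=> stu ls n_gt0; apply: significant_strict.
- exact: left_special_seq_in_lang.
- by rewrite /= size_Lpref.
have [V [lang_V ne_V]] := left_special_seq_branch (~~ x) n stu ls.
have [B [XB B_word]] := two_sided_extension stu lang_V.
pose B' z := B (z + Posz n)%R.
have XB' : in_Xtilde u B' := Xtilde_shift (Posz n) XB.
have B'_word k : k < n + size V -> B' (- Posz n + Posz k.+1)%R = nth false (Lpref l n ++ V) k.
  move=> lt_k; rewrite /B' (_ : (- Posz n + Posz k.+1 + Posz n)%R = Posz k.+1); last by lia.
  by rewrite B_word //= size_cat size_Lpref.
have B'_L k : k < n -> B' (- Posz n + Posz k.+1)%R = nth false (Lpref l n) k.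
  by move=> lt_k; rewrite B'_word ?nth_cat ?size_Lpref ?lt_k //; lia.
exists (fun i => B' (Posz i)); split.
  split; first exact: Xtilde_Xplus.
  exists B'; split => // k; rewrite /= size_Lpref => lt_k.
  by rewrite -B'_L //; congr B'; lia.
move=> [_ [B2 [XB2 B2_y B2_word]]].
have B2_L k : k < n -> B2 (- Posz n + Posz k.+1)%R = nth false (Lpref l n) k.
  move=> lt_k; have := B2_word k.+1; rewrite /= size_Lpref ltnS => /(_ lt_k) <-.
  by congr B2; lia.
have B'_B2 : B' (- Posz n)%R != B2 (- Posz n)%R.
  have := B2_word 0; rewrite /= size_Lpref sub0r => -> //.
  by rewrite /B' addNr (B_word 0) //=; case: (x).
have agree t : B' (- Posz n + Posz t.+1)%R = B2 (- Posz n + Posz t.+1)%R.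
  case: (ltnP t n) => [lt_t | le_t]; first by rewrite B'_L ?B2_L.
  by rewrite (_ : (- Posz n + Posz t.+1)%R = Posz (t.+1 - n)) ?B2_y //; lia.
have B'_l := Xtilde_left_special_branch stu ls XB' XB2 B'_B2 agree.
apply: ne_V; apply: (eq_from_nth (x0 := false)); rewrite size_cat !size_Lpref // => k lt_k.
by rewrite -B'_word // B'_l nth_mkseq.
Qed.

Theorem lemma4p9 (u l : nat -> bool) (n : nat) (x : bool) :
  sturmian u -> left_special_seq u l -> 1 < n ->
  significant u (x :: Lpref l n.-1) ->
  HB_arrow u (x :: Lpref l n.-1) (x :: Lpref l n).
Proof.
move=> stu ls n_gt1 sig_xL; have sig_xLn := significant_cons_Lpref x stu ls (ltnW n_gt1).
split=> //; split=> //; exists (l n.-1).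
have -> : rcons (x :: Lpref l n.-1) (l n.-1) = x :: Lpref l n.
  by rewrite rcons_cons -mkseqS prednK // ltnW.
by split; [exact: left_special_seq_in_lang | exact: is_sig_self].
Qed.
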